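(* Let $n_1,n_2,n_3\in\mathbb{N}$, let $\sigma$ be a segment label map on $G=\{1,\dots,n_1\}\times\{1,\dots,n_2\}\times\{1,\dots,n_3\}$, fix any decomposition of $T$ into blocks, let $\tau=\mathrm{LABEL}(\sigma,T)$ and let $\tau'$ be the output of the block-wise method. Then for all 1-cells $t_1\in T$: $\tau(t_1)=0\Leftrightarrow\tau'(t_1)=0$.
   Context: Voxel grid and segmentation: $G=\{1,\dots,n_1\}\times\{1,\dots,n_2\}\times\{1,\dots,n_3\}$; voxels $v,w$ are adjacent iff $\sum_i|v_i-w_i|=1$. A segment label map is $\sigma:G\to\mathbb{N}=\{1,2,\dots\}$ such that each level set $\sigma^{-1}(l)$ is connected w.r.t. this adjacency. Topological grid: $T=\{1,\dots,2n_1-1\}\times\{1,\dots,2n_2-1\}\times\{1,\dots,2n_3-1\}$; a cell with exactly $j$ odd coordinates is a $j$-cell. Voxel $r$ corresponds to the 3-cell $2r-1$. Two cells are 6-neighbors if they differ by $1$ in exactly one coordinate. For a $j$-cell $t$, $\Gamma(t)$ is the set of 6-neighbors of $t$ in $T$ that are $(j+1)$-cells. Cells $t_1,t_2$ are connected, $t_1\leftrightarrow t_2$, iff there is $t\in T$ with $t_1,t_2\in\Gamma(t)$. Procedure LABEL: for a voxel box $\prod_i\{a_i,\dots,b_i\}\subseteq G$ let $B=\prod_i\{2a_i-1,\dots,2b_i-1\}$ be its cell box. $\mathrm{LABEL}(\sigma,B)$ produces $\lambda:B\to\mathbb{N}_0$: (1) $\lambda(2r-1)=\sigma(r)$ for 3-cells.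 (2) For $j=2,1,0$ in this order: for each $j$-cell $t\in B$ let $\theta(t)$ be the set of positive integers occurring exactly once in $(\lambda(s))_{s\in\Gamma(t)}$; $t$ is active iff $\theta(t)\ne\emptyset$, inactive $j$-cells get label $0$; the active $j$-cells of $B$ are partitioned into maximal sets of cells with equal $\theta$ that are connected by $\leftrightarrow$-paths inside the set; these classes are numbered $1,\dots,m_j(B)$ arbitrarily and each active $j$-cell gets its class number. Reference labeling: $\tau=\mathrm{LABEL}(\sigma,T)$. Block-wise method: for each axis $i$ choose odd integers $1=a^i_0<\dots<a^i_{m_i}=2n_i-1$; blocks are the boxes $\prod_i\{a^i_{k_i-1},\dots,a^i_{k_i}\}$. Step 1: $\lambda_B=\mathrm{LABEL}(\sigma,B)$ for each block. Step 2: with blocks ordered $B_1,\dots,B_K$, add offset $\sum_{k'<k}m_j(B_{k'})$ to each positive $j$-cell label of $\lambda_{B_k}$ ($j\in\{0,1,2\}$). Step 3: for $j\in\{1,2\}$, via union–find, unite the labels received in different blocks by any active $j$-cell lying in several blocks, and replace every positive $j$-cell label by its set representative. Step 4: for each 0-cell $t_0$ and each pair of distinct 1-cell labels occurring exactly once among the current labels of $\Gamma(t_0)$, merge the two labels if the corresponding 1-cells bound the same set of current 2-cell labels; if any merge took place at $t_0$, recompute the activity of $t_0$ and set its label to $0$ if inactive. The result is $\tau':T\to\mathbb{N}_0$. *)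

From Stdlib Require Import Relations.
From mathcomp Require Import all_boot.

Set Implicit Arguments.
Unset Strict Implicit.
Unset Printing Implicit Defensive.

(* Cells / voxels are integer triples; boxes are (lower, upper) corners *)
Definition cell := (nat * nat * nat)%type.
Definition box := (cell * cell)%type.

Definition cx (t : cell) : nat := t.1.1.
Definition cy (t : cell) : nat := t.1.2.
Definition cz (t : cell) : nat := t.2.

(* number of odd coordinates: t is a (dimc t)-cell *)
Definition dimc (t : cell) : nat := odd (cx t) + odd (cy t) + odd (cz t).

Definition in_box (B : box) (t : cell) : bool :=
  [&& cx B.1 <= cx t <= cx B.2, cy B.1 <= cy t <= cy B.2
    & cz B.1 <= cz t <= cz B.2].

Definition in_grid (n : cell) (r : cell) : bool := in_box ((1, 1, 1), n) r.

Definition Tbox (n : cell) : box :=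
  ((1, 1, 1), ((cx n).*2.-1, (cy n).*2.-1, (cz n).*2.-1)).

(* voxel r <-> 3-cell 2r-1 ; for an odd coordinate c = 2r-1, r = c./2 + 1 *)
Definition vox (t : cell) : cell := ((cx t)./2.+1, (cy t)./2.+1, (cz t)./2.+1).

Definition absdist (a b : nat) : nat := (a - b) + (b - a).
Definition adj (v w : cell) : bool :=
  absdist (cx v) (cx w) + absdist (cy v) (cy w) + absdist (cz v) (cz w) == 1.

Fixpoint chain (R : cell -> cell -> Prop) (x : cell) (p : seq cell) : Prop :=
  if p is y :: q then R x y /\ chain R y q else True.

Definition segment_map (n : cell) (sigma : cell -> nat) : Prop :=
  (forall r, in_grid n r -> 0 < sigma r) /\
  (forall r s, in_grid n r -> in_grid n s -> sigma r = sigma s ->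
     exists p : seq cell, chain (fun v w => adj v w) r p /\ last r p = s /\
       all (fun v => in_grid n v && (sigma v == sigma r)) p).

Definition nb6 (t : cell) : seq cell :=
  let '(x, y, z) := t in
  [:: (x.+1, y, z); (x.-1, y, z); (x, y.+1, z); (x, y.-1, z);
      (x, y, z.+1); (x, y, z.-1)].

Definition Gamma (n : cell) (t : cell) : seq cell :=
  [seq s <- nb6 t | in_box (Tbox n) s && (dimc s == (dimc t).+1)].

Definition conn (n : cell) (t1 t2 : cell) : Prop :=
  exists t, in_box (Tbox n) t /\ t1 \in Gamma n t /\ t2 \in Gamma n t.

Definition theta (n : cell) (lam : cell -> nat) (t : cell) (v : nat) : bool :=
  (0 < v) && (count (fun s => lam s == v) (Gamma n t) == 1).

Definition active (n : cell) (lam : cell -> nat) (t : cell) : bool :=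
  has (fun s => theta n lam t (lam s)) (Gamma n t).

Definition same_theta (n : cell) (lam : cell -> nat) (t1 t2 : cell) : Prop :=
  forall v, theta n lam t1 v = theta n lam t2 v.

Definition same_class (n : cell) (lam : cell -> nat) (B : box) (t1 t2 : cell)
  : Prop :=
  exists p : seq cell, chain (conn n) t1 p /\ last t1 p = t2 /\
    forall s, s \in t1 :: p ->
      [/\ in_box B s, dimc s = dimc t1, active n lam s & same_theta n lam s t1].

(* lam is a possible output of LABEL(sigma, B) (for some numbering of the
   classes); m j = m_j(B) is the number of classes of active j-cells *)
Definition is_LABEL (n : cell) (sigma : cell -> nat) (B : box)
    (lam : cell -> nat) (m : nat -> nat) : Prop :=
  [/\ (forall t, in_box B t -> dimc t = 3 -> lam t = sigma (vox t)),
      (forall t, in_box B t -> dimc t <= 2 -> ~~ active n lam t -> lam t = 0),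
      (forall t, in_box B t -> dimc t <= 2 -> active n lam t ->
         0 < lam t <= m (dimc t)),
      (forall t1 t2, in_box B t1 -> in_box B t2 -> dimc t1 <= 2 ->
         dimc t2 = dimc t1 -> active n lam t1 -> active n lam t2 ->
         (lam t1 = lam t2 <-> same_class n lam B t1 t2))
    & (forall j l, j <= 2 -> 0 < l <= m j ->
         exists t, [/\ in_box B t, dimc t = j, active n lam t & lam t = l])].

Definition valid_breaks (n : nat) (a : seq nat) : bool :=
  [&& head 0 a == 1, last 0 a == n.*2.-1, all odd a & sorted ltn a].

Fixpoint consec (s : seq nat) : seq (nat * nat) :=
  match s with
  | x :: ((y :: _) as s') => (x, y) :: consec s'
  | _ => [::]
  end.

(* the intervals {a_(k-1), ..., a_k}; the degenerate chain [:: 1] (only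
   possible for n = 1) is read as the single interval {1} *)
Definition intervals (a : seq nat) : seq (nat * nat) :=
  if a is [:: x] then [:: (x, x)] else consec a.

Definition all_blocks (a1 a2 a3 : seq nat) : seq box :=
  flatten [seq [seq ((p.1, q.1, r.1), (p.2, q.2, r.2))
                   | q <- intervals a2, r <- intervals a3]
          | p <- intervals a1].

Definition box0 : box := ((0, 0, 0), (0, 0, 0)).

Definition offset (ms : nat -> nat -> nat) (k j : nat) : nat :=
  \sum_(k' < k) ms k' j.

Definition lab2 (lams : nat -> cell -> nat) (ms : nat -> nat -> nat)
    (k : nat) (t : cell) : nat :=
  if 0 < lams k t then lams k t + offset ms k (dimc t) else 0.

Definition unite3 (n : cell) (blocks : seq box) (lams : nat -> cell -> nat)
    (ms : nat -> nat -> nat) (j : nat) (x y : nat) : Prop :=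
  exists k k' t,
    [/\ k < size blocks, k' < size blocks,
        in_box (nth box0 blocks k) t, in_box (nth box0 blocks k') t
      & dimc t = j] /\
    active n (lams k) t /\ active n (lams k') t /\
    lab2 lams ms k t = x /\ lab2 lams ms k' t = y.

Definition E3 n blocks lams ms j : relation nat :=
  clos_refl_sym_trans nat (unite3 n blocks lams ms j).

(* Step 4.  cur = current labels after step 3; E = current equivalence of
   1-cell labels (union-find state). *)
Definition unique_in (n : cell) (cur : cell -> nat) (E : relation nat)
    (t0 : cell) (x : nat) : Prop :=
  (exists s, [/\ s \in Gamma n t0, 0 < cur s & E (cur s) x]) /\
  (forall s s', s \in Gamma n t0 -> s' \in Gamma n t0 -> 0 < cur s ->
     0 < cur s' -> E (cur s) x -> E (cur s') x -> s = s').

Definition merge_at (n : cell) (cur : cell -> nat) (E : relation nat)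
    (t0 : cell) (x y : nat) : Prop :=
  exists s1 s2,
    [/\ s1 \in Gamma n t0, s2 \in Gamma n t0, cur s1 = x, cur s2 = y
      & 0 < x] /\ 0 < y /\ ~ E x y /\
    unique_in n cur E t0 x /\ unique_in n cur E t0 y /\
    [seq cur s | s <- Gamma n s1] =i [seq cur s | s <- Gamma n s2].

Fixpoint step4 (n : cell) (cur : cell -> nat) (E : relation nat)
    (zs : seq cell) : relation nat :=
  match zs with
  | [::] => E
  | t0 :: zs' =>
      step4 n cur
        (clos_refl_sym_trans nat (fun x y => E x y \/ merge_at n cur E t0 x y))
        zs'
  end.

Definition active_cur (n : cell) (cur : cell -> nat) (E : relation nat)
    (t0 : cell) : Prop :=
  exists s, s \in Gamma n t0 /\ 0 < cur s /\ unique_in n cur E t0 (cur s).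

Definition representative (E : relation nat) (rep : nat -> nat) : Prop :=
  (forall x, E (rep x) x) /\ (forall x y, E x y -> rep x = rep y).

(* tau' is a possible output of the block-wise method with the blocks
   ordered as in the list `blocks` *)
Definition blockwise_output (n : cell) (sigma : cell -> nat)
    (blocks : seq box) (tau' : cell -> nat) : Prop :=
  exists (lams : nat -> cell -> nat) (ms : nat -> nat -> nat)
         (rep3 : nat -> nat -> nat) (home : cell -> nat) (zs : seq cell)
         (rep4 : nat -> nat),
  let cur (t : cell) :=
    if 0 < lab2 lams ms (home t) t
    then rep3 (dimc t) (lab2 lams ms (home t) t) else 0 in
  let Ebefore (t : cell) := step4 n cur (@eq nat) (take (index t zs) zs) in
  let Eafter (t : cell) := step4 n cur (@eq nat) (take (index t zs).+1 zs) in
  (forall k, k < size blocks ->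
     is_LABEL n sigma (nth box0 blocks k) (lams k) (ms k)) /\
  representative (E3 n blocks lams ms 1) (rep3 1) /\
  representative (E3 n blocks lams ms 2) (rep3 2) /\
  (* the block from which each cell's stored label is taken *)
  (forall t, in_box (Tbox n) t ->
     home t < size blocks /\ in_box (nth box0 blocks (home t)) t) /\
  (* Step 4: processing order of all 0-cells *)
  uniq zs /\
  (forall t, (t \in zs) = in_box (Tbox n) t && (dimc t == 0)) /\
  representative (step4 n cur (@eq nat) zs) rep4 /\
  (forall t, in_box (Tbox n) t -> dimc t = 3 -> tau' t = sigma (vox t)) /\
  (forall t, in_box (Tbox n) t -> dimc t = 2 -> tau' t = cur t) /\
  (forall t, in_box (Tbox n) t -> dimc t = 1 ->
     tau' t = if 0 < cur t then rep4 (cur t) else 0) /\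
  (forall t, in_box (Tbox n) t -> dimc t = 0 ->
     ((exists x y, merge_at n cur (Ebefore t) t x y) /\
        ~ active_cur n cur (Eafter t) t -> tau' t = 0) /\
     (~ ((exists x y, merge_at n cur (Ebefore t) t x y) /\
          ~ active_cur n cur (Eafter t) t) ->
        tau' t = lab2 lams ms (home t) t)).

From Stdlib Require Import Relations.
From mathcomp Require Import all_boot zify.

Set Implicit Arguments.
Unset Strict Implicit.
Unset Printing Implicit Defensive.

(* Whether a 1-cell is active depends only on which 2-cells of its coboundary
   are labelled positively and which of them carry equal labels.  In LABEL,
   run on T or on any block, a 2-cell is positive iff it is active for the
   voxel labelling, and two 2-cells sharing a 1-cell face are equally
   labelled iff both are inactive or both are active with the same theta;
   both conditions only see sigma.  Blocks have odd corners, so they contain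
   the coboundary of each of their cells, hence LABEL on T and LABEL on the
   home block of a 1-cell agree on its activity.  Finally offsets,
   union-find representatives and step 4 only ever identify positive labels
   with positive labels, so tau' t1 is positive iff the block label is. *)

Lemma Gamma_dimc n t s : s \in Gamma n t -> dimc s = (dimc t).+1.
Proof. by rewrite mem_filter => /andP[/andP[_ /eqP]]. Qed.

Lemma Gamma_Tbox n t s : s \in Gamma n t -> in_box (Tbox n) s.
Proof. by rewrite mem_filter => /andP[/andP[]]. Qed.

Definition Gamma_closed (n : cell) (B : box) : Prop :=
  forall t s, in_box B t -> s \in Gamma n t -> in_box B s.

Lemma Tbox_Gamma_closed n : Gamma_closed n (Tbox n).
Proof. by move=> t s _; apply: Gamma_Tbox. Qed.

Definition odd_corners (B : box) : bool :=
  [&& odd (cx B.1), odd (cx B.2), odd (cy B.1), odd (cy B.2),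
      odd (cz B.1) & odd (cz B.2)].

Lemma odd_step_in_interval a b c c' : odd a -> odd b -> a <= c <= b ->
  c' = c.+1 \/ c' = c.-1 -> odd c' -> a <= c' <= b.
Proof.
move=> oa ob /andP[ac cb] [->|->] oc'.
- have : c != b by apply: contraTneq oc' => ->; rewrite /= ob.
  by move/eqP; lia.
- have : c != a by apply: contraTneq oc' => ->; case: a oa {ac cb} => //= a ->.
  by move/eqP; lia.
Qed.

(* A coboundary step turns one even coordinate into an odd one, which cannot
   leave an interval with odd ends. *)
Lemma odd_corners_Gamma_closed n B : odd_corners B -> Gamma_closed n B.
Proof.
case: B => [[[x1 y1] z1] [[x2 y2] z2]].
rewrite /odd_corners /cx /cy /cz /= => /and5P[ox1 ox2 oy1 oy2 /andP[oz1 oz2]].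
move=> [[x y] z] s; rewrite /in_box /cx /cy /cz /= => /and3P[hx hy hz].
rewrite /Gamma mem_filter => /andP[/andP[_ /eqP]].
rewrite /nb6 !inE => Hd /or3P[/eqP E|/eqP E|/orP[/eqP E|/or3P[/eqP E|/eqP E|/eqP E]]];
  subst s; move: Hd; rewrite /dimc /cx /cy /cz /= => Hd; apply/and3P; split => //;
  apply: odd_step_in_interval; eauto;
  rewrite /=; match goal with |- context [odd ?c] =>
    by move: Hd; case: (odd c) => //=; lia end.
Qed.

Lemma consec_mem (s : seq nat) p : p \in consec s -> p.1 \in s /\ p.2 \in s.
Proof.
elim: s => [|x s IH] //=; case: s IH => [|y s] IH //=.
rewrite inE => /orP[/eqP->|/IH [h1 h2]]; first by rewrite !inE !eqxx orbT.
by split; rewrite in_cons ?h1 ?h2 orbT.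
Qed.

Lemma intervals_mem (a : seq nat) p : p \in intervals a -> p.1 \in a /\ p.2 \in a.
Proof.
case: a => [|x [|y s]] //; last exact: consec_mem.
by rewrite inE => /eqP ->; rewrite /= inE eqxx.
Qed.

Lemma all_blocks_odd_corners n1 n2 n3 a1 a2 a3 B :
  valid_breaks n1 a1 -> valid_breaks n2 a2 -> valid_breaks n3 a3 ->
  B \in all_blocks a1 a2 a3 -> odd_corners B.
Proof.
move=> /and4P[_ _ o1 _] /and4P[_ _ o2 _] /and4P[_ _ o3 _].
move=> /flattenP[_ /mapP[p Hp ->]] /allpairsP[[q r] [/= Hq Hr ->]].
have [p1 p2] := intervals_mem Hp; have [q1 q2] := intervals_mem Hq.
have [r1 r2] := intervals_mem Hr.
by rewrite /odd_corners /cx /cy /cz /= (allP o1 _ p1) (allP o1 _ p2)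
  (allP o2 _ q1) (allP o2 _ q2) (allP o3 _ r1) (allP o3 _ r2).
Qed.

Lemma theta_eq_in n (lam lam' : cell -> nat) t :
  {in Gamma n t, lam =1 lam'} -> forall v, theta n lam t v = theta n lam' t v.
Proof.
move=> Hl v; rewrite /theta; congr (_ && (_ == 1)).
by apply: eq_in_count => u /Hl ->.
Qed.

Lemma active_eq_in n (lam lam' : cell -> nat) t :
  {in Gamma n t, lam =1 lam'} -> active n lam t = active n lam' t.
Proof.
move=> Hl; apply: eq_in_has => u Hu /=.
by rewrite (theta_eq_in Hl) Hl.
Qed.

Lemma active_eq_pattern n (lam lam' : cell -> nat) t :
  {in Gamma n t, forall u, (0 < lam u) = (0 < lam' u)} ->
  {in Gamma n t &, forall u s, lam u = lam s <-> lam' u = lam' s} ->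
  active n lam t = active n lam' t.
Proof.
move=> Hpos Heq; apply: eq_in_has => s Hs /=; rewrite /theta Hpos //.
congr (_ && (_ == 1)); apply: eq_in_count => u Hu /=.
by apply/eqP/eqP => /(Heq _ _ Hu Hs).
Qed.

Definition voxel_label (sigma : cell -> nat) (t : cell) : nat := sigma (vox t).

Definition same_label2 (n : cell) (sigma : cell -> nat) (u s : cell) : Prop :=
  let lam := voxel_label sigma in
  (~~ active n lam u /\ ~~ active n lam s) \/
  [/\ active n lam u, active n lam s & same_theta n lam u s].

Section LABEL_on_a_block.

Variables (n : cell) (sigma : cell -> nat) (B : box) (lam : cell -> nat)
  (m : nat -> nat).
Hypothesis HL : is_LABEL n sigma B lam m.
Hypothesis HB : Gamma_closed n B.

Lemma LABEL_gt0 s : in_box B s -> dimc s <= 2 -> (0 < lam s) = active n lam s.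
Proof.
move=> Bs ds; case: HL => _ Hinact Hact _ _.
case: (boolP (active n lam s)) => a; first by case/andP: (Hact s Bs ds a).
by rewrite (Hinact s Bs ds a).
Qed.

Lemma LABEL_eq_voxel_on_Gamma2 s : in_box B s -> dimc s = 2 ->
  {in Gamma n s, lam =1 voxel_label sigma}.
Proof.
move=> Bs ds u Hu; case: HL => H3 _ _ _ _.
by apply: H3; [exact: HB Bs Hu | rewrite (Gamma_dimc Hu) ds].
Qed.

Lemma LABEL_gt0_voxel_active s : in_box B s -> dimc s = 2 ->
  (0 < lam s) = active n (voxel_label sigma) s.
Proof.
move=> Bs ds; rewrite LABEL_gt0 ?ds //.
exact/active_eq_in/LABEL_eq_voxel_on_Gamma2.
Qed.

Lemma LABEL_eq_in_Gamma1 t u s :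
  in_box B t -> in_box (Tbox n) t -> dimc t = 1 ->
  u \in Gamma n t -> s \in Gamma n t -> lam u = lam s <-> same_label2 n sigma u s.
Proof.
move=> Bt Tt dt Hu Hs.
have Bu : in_box B u by exact: HB Bt Hu.
have Bs : in_box B s by exact: HB Bt Hs.
have du : dimc u = 2 by rewrite (Gamma_dimc Hu) dt.
have ds : dimc s = 2 by rewrite (Gamma_dimc Hs) dt.
have Tu := theta_eq_in (LABEL_eq_voxel_on_Gamma2 Bu du).
have Ts := theta_eq_in (LABEL_eq_voxel_on_Gamma2 Bs ds).
have Pu := LABEL_gt0 Bu (eq_leq du); have Ps := LABEL_gt0 Bs (eq_leq ds).
rewrite /same_label2 -LABEL_gt0_voxel_active // -LABEL_gt0_voxel_active // Pu Ps.
case: (boolP (active n lam u)) => au; case: (boolP (active n lam s)) => as_.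
- case: HL => _ _ _ Hclass _.
  rewrite (Hclass u s Bu Bs (eq_leq du) (etrans ds (esym du)) au as_).
  split.
  + case=> p [_ [last_p Hp]]; right; split => //.
    have : s \in u :: p by rewrite -last_p mem_last.
    by case/Hp => _ _ _ st v; rewrite -Tu -Ts st.
  + case=> [[] //|[_ _ st]].
    exists [:: s]; split; first by split => //; exists t.
    split => // w; rewrite !inE => /orP[/eqP->|/eqP->]; first by split.
    by split => //; [rewrite ds du | move=> v; rewrite Ts Tu st].
- split=> [E|[[]|[]] //].
  by move: Pu Ps; rewrite E au (negbTE as_) => ->.
- split=> [E|[[]|[]] //].
  by move: Pu Ps; rewrite E as_ (negbTE au) => ->.
- have hu : lam u = 0 by apply/eqP; rewrite -leqn0 leqNgt Pu.
  have hs : lam s = 0 by apply/eqP; rewrite -leqn0 leqNgt Ps.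
  by rewrite hu hs; split => // _; left.
Qed.

End LABEL_on_a_block.

Lemma LABEL_active1_agree n sigma B1 lam1 m1 B2 lam2 m2 t :
  is_LABEL n sigma B1 lam1 m1 -> Gamma_closed n B1 ->
  is_LABEL n sigma B2 lam2 m2 -> Gamma_closed n B2 ->
  in_box B1 t -> in_box B2 t -> in_box (Tbox n) t -> dimc t = 1 ->
  active n lam1 t = active n lam2 t.
Proof.
move=> L1 G1 L2 G2 B1t B2t Tt dt; apply: active_eq_pattern.
  move=> s Hs; have ds : dimc s = 2 by rewrite (Gamma_dimc Hs) dt.
  by rewrite (LABEL_gt0_voxel_active L1 G1 (G1 _ _ B1t Hs) ds)
             (LABEL_gt0_voxel_active L2 G2 (G2 _ _ B2t Hs) ds).
move=> u s Hu Hs.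
by rewrite (LABEL_eq_in_Gamma1 L1 G1 B1t Tt dt Hu Hs)
           (LABEL_eq_in_Gamma1 L2 G2 B2t Tt dt Hu Hs).
Qed.

Definition zero_closed (R : relation nat) : Prop :=
  forall x y, R x y -> (x == 0) = (y == 0).

Lemma zero_closed_crst (R : relation nat) :
  zero_closed R -> zero_closed (clos_refl_sym_trans nat R).
Proof.
by move=> HR x y; elim=> {x y} [x y /HR|x|x y _ ->|x y z _ -> _ ->].
Qed.

Lemma zero_closed_step4 n cur E zs : zero_closed E -> zero_closed (step4 n cur E zs).
Proof.
elim: zs E => [|t0 zs IH] E HE //=; apply/IH/zero_closed_crst => x y [/HE //|].
case=> s1 [s2 [[_ _ _ _ x_gt0] [y_gt0 _]]].
by move: x_gt0 y_gt0; rewrite !lt0n => /negbTE -> /negbTE ->.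
Qed.

Lemma lab2_gt0 lams ms k t : (0 < lab2 lams ms k t) = (0 < lams k t).
Proof. by rewrite /lab2; case: ifP => // pos; rewrite addn_gt0 pos. Qed.

Lemma E3_zero_closed n sigma blocks lams ms j :
  (forall k, k < size blocks -> is_LABEL n sigma (nth box0 blocks k) (lams k) (ms k)) ->
  j <= 2 -> zero_closed (E3 n blocks lams ms j).
Proof.
move=> HL j_le2; apply: zero_closed_crst => x y [k1 [k2 [t [[hk1 hk2 Bt1 Bt2 dt]]]]].
case=> [a1 [a2 [<- <-]]]; rewrite -dt in j_le2.
case: (HL k1 hk1) => _ _ H1 _ _; case: (HL k2 hk2) => _ _ H2 _ _.
have /andP[p1 _] := H1 t Bt1 j_le2 a1; have /andP[p2 _] := H2 t Bt2 j_le2 a2.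
by move: p1 p2; rewrite -!(lab2_gt0 lams ms) !lt0n => /negbTE -> /negbTE ->.
Qed.

Lemma representative_gt0 E rep x :
  representative E rep -> zero_closed E -> 0 < x -> 0 < rep x.
Proof. by case=> Hrep _ HE; rewrite !lt0n (HE _ _ (Hrep x)). Qed.

Unset Implicit Arguments.

Theorem proposition4 (n1 n2 n3 : nat) (sigma : cell -> nat)
    (a1 a2 a3 : seq nat) (blocks : seq box) (tau tau' : cell -> nat)
    (mT : nat -> nat) :
  segment_map (n1, n2, n3) sigma ->
  valid_breaks n1 a1 -> valid_breaks n2 a2 -> valid_breaks n3 a3 ->
  perm_eq blocks (all_blocks a1 a2 a3) ->
  is_LABEL (n1, n2, n3) sigma (Tbox (n1, n2, n3)) tau mT ->
  blockwise_output (n1, n2, n3) sigma blocks tau' ->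
  forall t1 : cell, in_box (Tbox (n1, n2, n3)) t1 -> dimc t1 = 1 ->
    (tau t1 = 0 <-> tau' t1 = 0).
Proof.
move=> _ v1 v2 v3 pb LT [lams [ms [rep3 [home [zs [rep4 out]]]]]] t1 Tt dt.
move: out; cbv zeta => -[HL [R31 [_ [Hhome [_ [_ [R4 [_ [_ [tau'_1 _]]]]]]]]]].
set n := (n1, n2, n3); have [hk Bt] := Hhome t1 Tt.
set k := home t1 in hk Bt *; set B := nth box0 blocks k in Bt *.
have GB : Gamma_closed n B.
  apply/odd_corners_Gamma_closed/(all_blocks_odd_corners v1 v2 v3).
  by rewrite -(perm_mem pb) mem_nth.
have tau_gt0 : (0 < tau t1) = (0 < lams k t1).
  have GT := @Tbox_Gamma_closed n.
  rewrite (LABEL_gt0 LT Tt) ?dt // (LABEL_gt0 (HL k hk) Bt) ?dt //.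
  exact: (LABEL_active1_agree LT GT (HL k hk) GB Tt Bt Tt dt).
have tau'_gt0 : (0 < tau' t1) = (0 < lams k t1).
  rewrite tau'_1 // dt -[home t1]/k -(lab2_gt0 lams ms k).
  case: (posnP (lab2 lams ms k t1)) => [_ //|lab_gt0].
  have rep3_gt0 := representative_gt0 R31 (E3_zero_closed HL (isT : 1 <= 2)) lab_gt0.
  rewrite rep3_gt0; apply: (representative_gt0 R4 _ rep3_gt0).
  by apply: zero_closed_step4 => x y ->.
have tau_eq0 : (tau t1 == 0) = (tau' t1 == 0) by rewrite !eqn0Ngt tau_gt0 tau'_gt0.
by split=> /eqP h; apply/eqP; [rewrite -tau_eq0 h | rewrite tau_eq0 h].
Qed.
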